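(* Let $(\Omega,\mathcal F,\mathbb P)$ be a probability space carrying a group of measurable bijections $\{\theta_n\}_{n\in\mathbb Z}$ each preserving $\mathbb P$, and let $\{a_n\}_{n\in\mathbb Z}$ be i.i.d. flow-compatible random variables with values in $\{1,2,\dots\}$, with $\mathbb E[a_0]<\infty$ and $\mathbb P[a_0=1]>0$. Let $f(n)=n+a_n$, let $\Phi^s$ be the set of successful integers and $\Phi^e$ the set of ephemeral integers. Then the intensity of $\Phi^s$ is $$\lambda^s=\mathbb P[0\in\Phi^s]=\frac{1}{\mathbb E[a_0]},$$ and the intensity of $\Phi^e$ is $\lambda^e=\mathbb P[0\in\Phi^e]=1-\frac{1}{\mathbb E[a_0]}$.
   Context: For $n\in\mathbb Z$, the set of descendants of $n$ is $D(n)=\{m\in\mathbb Z:\exists\, j\ge 0,\ f^j(m)=n\}$, where $f^j$ is the $j$-th iterate of $f$. An integer $n$ is successful if $D(n)$ is infinite and ephemeral if $D(n)$ is finite; $\Phi^s$ and $\Phi^e$ are the corresponding random subsets of $\mathbb Z$ (they are stationary point processes, being flow-compatible). *)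

From HB Require Import structures.
From mathcomp Require Import all_boot all_order all_algebra.
From mathcomp Require Import all_classical all_reals all_analysis.
Set Implicit Arguments. Unset Strict Implicit. Unset Printing Implicit Defensive.
Import Order.TTheory GRing.Theory Num.Theory.
Local Open Scope classical_set_scope.
Local Open Scope ring_scope.

Definition fmap (T : Type) (a : int -> T -> nat) (w : T) (n : int) : int :=
  n + (a n w)%:Z.

Definition descendants (T : Type) (a : int -> T -> nat) (w : T) (n : int)
  : set int :=
  [set m | exists j : nat, iter j (fmap a w) m = n].

Definition successful (T : Type) (a : int -> T -> nat) (n : int) : set T :=
  [set w | ~ finite_set (descendants a w n)].

Definition ephemeral (T : Type) (a : int -> T -> nat) (n : int) : set T :=
  [set w | finite_set (descendants a w n)].

Definition measure_preserving_flow (d : measure_display) (T : measurableType d)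
  (R : realType) (P : probability T R) (theta : int -> T -> T) : Prop :=
  [/\ theta 0 = id,
      (forall m n, theta (m + n) = theta m \o theta n),
      (forall n, measurable_fun setT (theta n)) &
      (forall n (A : set T), measurable A -> P (theta n @^-1` A) = P A)].

Definition flow_compatible (T : Type) (theta : int -> T -> T)
  (a : int -> T -> nat) : Prop :=
  forall n w, a n w = a 0 (theta n w).

(* i.i.d. for nat-valued (discrete) random variables indexed by Z:
   measurable level sets, identical distributions, and mutual independence
   (product rule over every finite family of distinct indices). *)
Definition iid_nat (d : measure_display) (T : measurableType d)
  (R : realType) (P : probability T R) (a : int -> T -> nat) : Prop :=
  [/\ (forall n k, measurable [set w | a n w = k]),
      (forall n k, P [set w | a n w = k] = P [set w | a 0 w = k]) &
      (forall (I : seq int) (k : int -> nat), uniq I ->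
         P (\bigcap_(i in [set` I]) [set w | a i w = k i]) =
         (\prod_(i <- I) P [set w | a i w = k i])%E)].

(* Almost surely exactly one successful integer n <= 0 jumps over 0, i.e. has f(n) > 0.
   Existence: as E[a_0] < oo, Borel-Cantelli leaves a.s. only finitely many k with
   a_{-k} >= k; the finitely many integers jumping over 0 then have every x <= 0 among their
   descendants, so one of them is successful.  Uniqueness: by stationarity the expected
   number of successful children of 0 is P(0 successful), and a successful integer has a
   successful child, so a.s. it has exactly one.  If a successful b jumped over a successful
   z to v, then with positive probability, independently of (a_i)_{i<z}, a_z = ... = a_{v-1}
   = 1, and v would have the two successful children b and v - 1.  Finally, as "0 is
   successful" only depends on (a_i)_{i<0},
     1 = sum_k P(-k successful, a_{-k} > k) = P(0 successful) sum_k P(a_0 > k)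
       = P(0 successful) E[a_0]. *)

From Pilot Require Import Defs.
From HB Require Import structures.
From mathcomp Require Import all_boot all_order all_algebra.
From mathcomp Require Import all_classical all_reals all_analysis.
From mathcomp Require Import measurable_realfun zify.
Set Implicit Arguments. Unset Strict Implicit. Unset Printing Implicit Defensive.
Import Order.TTheory GRing.Theory Num.Theory.
Local Open Scope classical_set_scope.
Local Open Scope ring_scope.

Lemma finite_set_lbound (A : set int) :
  finite_set A -> exists L, forall x, A x -> L <= x.
Proof.
move/finite_seqP => [s ->]; exists (foldr Order.min 0 s) => x /=.
elim: s => [//|y s IH]; rewrite inE => /orP[/eqP ->|/IH xs] /=.
  by rewrite ge_min lexx.
by rewrite ge_min xs orbT.
Qed.

Lemma finite_set_itv (L U : int) : finite_set [set x : int | L <= x <= U].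
Proof.
have := finite_image (fun i : nat => L + i%:Z) (finite_II (absz (U - L + 1))).
apply: sub_finite_set => x /= /andP[Lx xU]; exists (absz (x - L)) => /=; lia.
Qed.

Lemma notin_lim_sup_set (T : Type) (F : (set T)^nat) t :
  ~ lim_sup_set F t -> exists N, forall k, (N <= k)%N -> ~ F k t.
Proof.
move=> notF; apply: contrapT => noN; apply: notF => n _.
by apply: contrapT => none; apply: noN; exists n => k nk Fk; apply: none; exists k.
Qed.

Section probability_facts.
Context d (T : measurableType d) (R : realType) (P : probability T R).
Local Open Scope ereal_scope.

Let P_fin A : measurable A -> P A \is a fin_num.
Proof. exact: fin_num_measure. Qed.

Lemma indep_g_sigma_l (G H : set (set T)) :
  G `<=` measurable -> setI_closed G -> G setT -> H `<=` measurable ->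
  (forall A B, G A -> H B -> P (A `&` B) = P A * P B) ->
  forall A B, <<s G >> A -> H B -> P (A `&` B) = P A * P B.
Proof.
move=> Gm GI GT Hm GH A B GA HB; have mB := Hm _ HB.
have PBE : (fine (P B))%:E = P B := fineK (P_fin mB).
(* [X |-> P (X `&` B)] and [X |-> P B * P X] are finite measures that agree on [G] *)
rewrite muleC -PBE.
apply: (g_sigma_algebra_measure_unique G Gm (fun _ => setT) (fun _ => GT) _
  (mrestr P mB) (mscale (NngNum (fine_ge0 (measure_ge0 P B))) P) GI) => //.
- by rewrite bigcup_const.
- by move=> X GX; change (P (X `&` B) = (fine (P B))%:E * P X); rewrite PBE muleC; exact: GH.
- move=> _; change (P (setT `&` B) < +oo).
  by rewrite setTI (le_lt_trans (probability_le1 P mB)) ?ltry.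
Qed.

Lemma indep_g_sigma (G H : set (set T)) :
  G `<=` measurable -> setI_closed G -> G setT ->
  H `<=` measurable -> setI_closed H -> H setT ->
  (forall A B, G A -> H B -> P (A `&` B) = P A * P B) ->
  forall A B, <<s G >> A -> <<s H >> B -> P (A `&` B) = P A * P B.
Proof.
move=> Gm GI GT Hm HI HT GH A B GA HB.
have sGm : <<s G >> `<=` measurable := smallest_sub (@sigma_algebra_measurable _ T) Gm.
rewrite setIC muleC; apply: (indep_g_sigma_l Hm HI HT sGm) HB GA => X Y HX GY.
by rewrite setIC muleC; exact: indep_g_sigma_l GY HX.
Qed.

Section overlaps.
Variable A : (set T)^nat.
Hypothesis mA : forall k, measurable (A k).

Let overlap k := A k `&` \big[setU/set0]_(j < k) A j.

Let moverlap k : measurable (overlap k).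
Proof. by apply: measurableI => //; apply: bigsetU_measurable. Qed.

Lemma series_measure_overlaps :
  \sum_(k <oo) P (A k) = P (\bigcup_k A k) + \sum_(k <oo) P (overlap k).
Proof.
transitivity (\sum_(k <oo) (P (seqDU A k) + P (overlap k))).
  by apply: eq_eseriesr => k _; rewrite /seqDU -measureDI //; apply: bigsetU_measurable.
have mD k : measurable (seqDU A k).
  by apply: measurableD => //; apply: bigsetU_measurable.
rewrite nneseriesD // seqDU_bigcup_eq measure_semi_bigcup //.
exact: bigcupT_measurable.
Qed.

Lemma measure_bigcup_null_overlaps :
  (forall j k, (j < k)%N -> P (A k `&` A j) = 0) ->
  P (\bigcup_k A k) = \sum_(k <oo) P (A k).
Proof.
move=> null; rewrite series_measure_overlaps eseries0 ?adde0 // => k _ _.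
apply/eqP; rewrite eq_le measure_ge0 andbT /overlap big_distrr /=.
apply: le_trans (Boole_inequality P (A := fun j => A k `&` A j) _) _.
  by move=> j _; exact: measurableI.
by rewrite big1 // => j jk; exact: null.
Qed.

Lemma null_overlaps_of_series_le :
  \sum_(k <oo) P (A k) <= P (\bigcup_k A k) ->
  forall j k, (j < k)%N -> P (A k `&` A j) = 0.
Proof.
rewrite series_measure_overlaps -[leRHS]adde0 leeD2lE; last exact/P_fin/bigcupT_measurable.
move=> overlaps0 j k jk; apply/eqP; rewrite eq_le measure_ge0 andbT.
apply: le_trans overlaps0; apply: le_trans (nneseries_lim_ge (m := 0) k.+1 _) => //.
rewrite big_nat_recr //= -[X in X <= _]add0e; apply: leeD.
  by rewrite sume_ge0.
apply: le_measure; rewrite ?inE; [exact: measurableI | exact: moverlap |].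
by apply: setIS; rewrite -bigcup_mkord => t Ajt; exists j.
Qed.

End overlaps.

End probability_facts.

Section nat_valued_integral.
Context d (T : measurableType d) (R : realType) (mu : {measure set T -> \bar R}).
Local Open Scope ereal_scope.

Lemma integral_nat_tail (X : T -> nat) :
  (forall k, measurable [set t | (k < X t)%N]) ->
  \int[mu]_t (X t)%:R%:E = \sum_(k <oo) mu [set t | (k < X t)%N].
Proof.
move=> mX; transitivity (\int[mu]_t (\sum_(k <oo) (\1_[set t | (k < X t)%N] t)%:E)).
  apply: eq_integral => t _.
  rewrite (@nneseries_split _ _ 0%N (X t)); last by move=> k _; rewrite lee_fin.
  rewrite eseries0 ?adde0 => [|k kX _]; last by rewrite indicE memNset //=; lia.
  rewrite add0n (eq_big_nat _ _ (F2 := fun _ => 1)) => [|k /andP[_ kX]]; last first.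
    by rewrite indicE mem_set.
  by rewrite sumEFin sumr_const_nat subn0.
rewrite integral_nneseries // => [|k]; last exact/measurable_EFinP/measurable_indic.
by apply: eq_eseriesr => k _; rewrite integral_indic ?setIT.
Qed.

End nat_valued_integral.

Definition cylinder (T : Type) (a : int -> T -> nat) (I : seq int) (v : int -> nat) : set T :=
  \bigcap_(i in [set` I]) [set w | a i w = v i].

(* [set0] is added since cylinders with conflicting values meet in [set0]. *)
Definition cylinders (T : Type) (a : int -> T -> nat) (J : pred int) : set (set T) :=
  [set A | A = set0 \/ exists I v, all J I /\ A = cylinder a I v].

Section cylinders.
Context d (T : measurableType d) (a : int -> T -> nat).
Hypothesis a_meas : forall n v, measurable [set w | a n w = v].

Lemma cylinder1 n v : cylinder a [:: n] (fun _ => v) = [set w | a n w = v].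
Proof.
apply/seteqP; split=> w /=; first by apply; rewrite /= mem_seq1.
by move=> anv i /=; rewrite mem_seq1 => /eqP ->.
Qed.

Lemma cylinder_undup I v : cylinder a (undup I) v = cylinder a I v.
Proof. by apply/seteqP; split=> w wI i /=; [rewrite -mem_undup|rewrite mem_undup]; exact: wI. Qed.

Lemma cylinder_measurable I v : measurable (cylinder a I v).
Proof.
rewrite /cylinder bigcap_seq; elim: I => [|i I IH]; first by rewrite big_nil.
by rewrite big_cons; exact: measurableI.
Qed.

Lemma cylinders_measurable J : cylinders a J `<=` measurable.
Proof. by move=> A [->|[I [v [_ ->]]]]; [exact: measurable0|exact: cylinder_measurable]. Qed.

Lemma cylindersT J : cylinders a J setT.
Proof. by right; exists [::], (fun _ => 0%N); split=> //; apply/seteqP; split. Qed.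

Lemma cylinderI I J v u : (forall i, i \in I -> i \in J -> v i = u i) ->
  cylinder a I v `&` cylinder a J u =
  cylinder a (I ++ J) (fun i => if i \in I then v i else u i).
Proof.
move=> vu; apply/seteqP; split=> w.
  move=> [wI wJ] i /=; rewrite mem_cat; case: ifP => [iI _|_ /= iJ]; first exact: wI.
  exact: wJ.
move=> wIJ; split=> i /= i_in.
  by have := wIJ i; rewrite /= mem_cat i_in /=; apply.
have := wIJ i; rewrite /= mem_cat i_in orbT; case: ifP => [iI|_]; last by apply.
by rewrite -vu //; apply.
Qed.

Lemma g_sigma_cylinders_measurable J : <<s cylinders a J >> `<=` measurable.
Proof. exact (smallest_sub (@sigma_algebra_measurable _ T) (cylinders_measurable (J := J))). Qed.

Lemma cylinders_setI_closed J : setI_closed (cylinders a J).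
Proof.
move=> A B [->|[I [v [JI ->]]]]; first by rewrite set0I; left.
move=> [->|[J' [u [JJ' ->]]]]; first by rewrite setI0; left.
have [[i [iI iJ' vu]]|consistent] := pselect (exists i, [/\ i \in I, i \in J' & v i <> u i]).
  left; apply/seteqP; split=> // w [wI wJ']; apply: vu.
  by rewrite -(wI i iI) -(wJ' i iJ').
right; rewrite cylinderI => [|i iI iJ']; last first.
  by apply: contrapT => vu; apply: consistent; exists i.
by eexists _, _; split; last reflexivity; rewrite all_cat JI JJ'.
Qed.

End cylinders.

Section cylinder_independence.
Context d (T : measurableType d) (R : realType) (P : probability T R).
Variable a : int -> T -> nat.
Hypothesis a_meas : forall n v, measurable [set w | a n w = v].
Hypothesis a_indep : forall (I : seq int) (v : int -> nat), uniq I ->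
  P (cylinder a I v) = (\prod_(i <- I) P [set w | a i w = v i])%E.
Local Open Scope ereal_scope.

Lemma measure_cylinder I v :
  P (cylinder a I v) = \prod_(i <- undup I) P [set w | a i w = v i].
Proof. by rewrite -cylinder_undup a_indep // undup_uniq. Qed.

Lemma cylinders_indep (J1 J2 : pred int) : (forall i, J1 i -> J2 i -> False) ->
  forall A B, cylinders a J1 A -> cylinders a J2 B -> P (A `&` B) = P A * P B.
Proof.
move=> J12 A B [->|[I [v [J1I ->]]]]; first by rewrite set0I measure0 mul0e.
move=> [->|[J [u [J2J ->]]]]; first by rewrite setI0 measure0 mule0.
have IJ i : i \in I -> i \in J -> False by move=> iI iJ; exact: J12 (allP J1I i iI) (allP J2J i iJ).
rewrite cylinderI => [|i iI iJ]; last by case: (IJ i iI iJ).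
have IJ_perm : perm_eq (undup (I ++ J)) (undup I ++ undup J).
  apply: uniq_perm => [|/=|i]; first exact: undup_uniq.
    rewrite cat_uniq !undup_uniq andbT /=; apply/hasPn => i; rewrite !mem_undup.
    by move=> iJ; apply/negP => iI; exact: IJ iI iJ.
  by rewrite mem_cat !mem_undup mem_cat.
rewrite !measure_cylinder (perm_big _ IJ_perm) big_cat /=; congr (_ * _).
  by apply: eq_big_seq => i; rewrite mem_undup => ->.
apply: eq_big_seq => i; rewrite mem_undup => iJ.
by case: ifP => // iI; case: (IJ i iI iJ).
Qed.

Lemma g_sigma_cylinders_indep (J1 J2 : pred int) : (forall i, J1 i -> J2 i -> False) ->
  forall A B, <<s cylinders a J1 >> A -> <<s cylinders a J2 >> B ->
  P (A `&` B) = P A * P B.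
Proof.
move=> J12; apply: indep_g_sigma (cylinders_indep J12);
  by [exact: cylinders_measurable | exact: cylinders_setI_closed | exact: cylindersT].
Qed.

End cylinder_independence.

Definition eventually_short_jumps (T : Type) (a : int -> T -> nat) (w : T) :=
  exists N, forall k, (N <= k)%N -> (a (- k%:Z) w < k)%N.

Definition successful_child (T : Type) (a : int -> T -> nat) (y : int) (k : nat) : set T :=
  successful a (y - k%:Z) `&` [set w | a (y - k%:Z) w = k].

Definition successful_crossing (T : Type) (a : int -> T -> nat) (k : nat) : set T :=
  successful a (- k%:Z) `&` [set w | (k < a (- k%:Z) w)%N].

Section descendant_tree.
Variables (T : Type) (a : int -> T -> nat) (w : T).
Local Notation f := (Defs.fmap a w).
Local Notation D := (descendants a w).

Lemma fmap_ge n : n <= f n.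
Proof. by rewrite /Defs.fmap; lia. Qed.

Lemma iter_fmap_ge j x : x <= iter j f x.
Proof. by elim: j => //= j IH; apply: le_trans IH (fmap_ge _). Qed.

Lemma descendants_le n x : D n x -> x <= n.
Proof. by move=> [j <-]; exact: iter_fmap_ge. Qed.

Lemma descendants_trans n m x : D n m -> D m x -> D n x.
Proof. by move=> [j <-] [k <-]; exists (j + k)%N; rewrite iterD. Qed.

Lemma ephemeralP n : ephemeral a n w <-> exists L, forall x, D n x -> L <= x.
Proof.
split; first exact: finite_set_lbound.
move=> [L DL]; apply: sub_finite_set (finite_set_itv L n) => x Dx.
by rewrite /= DL // descendants_le.
Qed.

Lemma successful_iter j n : successful a n w -> successful a (iter j f n) w.
Proof. by move=> Dn; apply: sub_infinite_set Dn => x; apply: descendants_trans; exists j. Qed.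

Hypothesis a_gt0 : forall n, (0 < a n w)%N.

Lemma fmap_gt n : n < f n.
Proof. by have := a_gt0 n; rewrite /Defs.fmap; lia. Qed.

Lemma fmap_crossing z x : x <= z -> exists j, iter j f x <= z < f (iter j f x).
Proof.
move=> xz; have [k] : exists k : nat, z - x = k%:Z by exists (absz (z - x)); lia.
elim/ltn_ind: k x xz => k IH x xz zx.
have [zfx|fxz] := ltP z (f x); first by exists 0%N; rewrite /= xz.
have lt_k : (absz (z - f x) < k)%N by have := fmap_gt x; lia.
have [j jx] := IH _ lt_k (f x) fxz ltac:(lia).
by exists j.+1; rewrite iterSr.
Qed.

Lemma iter_fmap_ones z n : (forall i, (i < n)%N -> a (z + i%:Z) w = 1%N) ->
  iter n f z = z + n%:Z.
Proof.
elim: n => [|n IH] ones /=; first lia.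
by rewrite IH => [|i ?]; rewrite /Defs.fmap ?ones //; lia.
Qed.

Lemma exists_successful_child0 : eventually_short_jumps a w -> successful a 0 w ->
  exists k, a (- k%:Z) w = k /\ successful a (- k%:Z) w.
Proof.
move=> [N short] D0; apply: contrapT => none; apply: D0.
pose children := [set k | (k < N)%N /\ a (- k%:Z) w = k].
suff : D 0 `<=` [set 0] `|` \bigcup_(k in children) D (- k%:Z).
  move/sub_finite_set; apply; rewrite finite_setU; split; first exact: finite_set1.
  apply: bigcup_finite => [|k [_ ak]]; first by apply: sub_finite_set (finite_II N) => k [].
  by apply: contrapT => Dk; apply: none; exists k.
move=> x [[|j] jx]; first by left.
set c := iter j f x; have fc : f c = 0 by rewrite -jx iterS.
have ck : - (absz c)%:Z = c by have := fmap_gt c; lia.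
right; exists (absz c); last by rewrite ck; exists j.
have ac : a c w = absz c by move: fc; rewrite /Defs.fmap; lia.
rewrite /children /= ck; split=> //; rewrite ltnNge; apply/negP => Nk.
by have := short _ Nk; rewrite ck ac ltnn.
Qed.

Lemma exists_successful_crossing0 : eventually_short_jumps a w ->
  exists n, [/\ n <= 0, 0 < f n & successful a n w].
Proof.
move=> [N short]; apply: contrapT => none.
pose crossers := [set k | (k < N)%N /\ (k < a (- k%:Z) w)%N].
have cover : [set x : int | x <= 0] `<=` \bigcup_(k in crossers) D (- k%:Z).
  move=> x /= x0; have [j /andP[c0 fc0]] := fmap_crossing x0.
  set c := iter j f x in c0 fc0 *; have ck : - (absz c)%:Z = c by lia.
  exists (absz c); last by rewrite ck; exists j.
  have ac : (absz c < a c w)%N by move: fc0; rewrite /Defs.fmap; lia.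
  rewrite /crossers /= ck; split=> //; rewrite ltnNge; apply/negP => Nk.
  by have := short _ Nk; rewrite ck ltnNge (ltnW ac).
have [L L_le] : exists L : int, forall x, x <= 0 -> L <= x.
  apply: (@finite_set_lbound [set x : int | x <= 0]); apply: sub_finite_set cover _.
  apply: bigcup_finite => [|k [_ ak]]; first by apply: sub_finite_set (finite_II N) => k [].
  by apply: contrapT => Dk; apply: none; exists (- k%:Z); split=> //; rewrite /Defs.fmap; lia.
by have := L_le (- (absz L)%:Z - 1); lia.
Qed.

Lemma successful_children_of_jump_over b z v : (b < z < v)%R ->
  successful a b w -> successful a z w -> a b w = absz (v - b)%R ->
  (forall i, (i < absz (v - z))%N -> a (z + i%:Z)%R w = 1%N) ->
  successful_child a v (absz (v - b)%R) w /\ successful_child a v 1 w.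
Proof.
move=> /andP[bz zv] Sb Sz ab ones; have vb : (v - (absz (v - b)%R)%:Z)%R = b by lia.
have zv1 : (v - 1%:Z)%R = (z + (absz (v - z)%R).-1%:Z)%R by lia.
split; first by rewrite /successful_child vb.
split; last by rewrite /= zv1 ones //; lia.
rewrite zv1 -iter_fmap_ones => [|i ilt]; first exact: successful_iter.
by apply: ones; lia.
Qed.

End descendant_tree.

Lemma setC_successful (T : Type) (a : int -> T -> nat) n :
  ~` successful a n = ephemeral a n.
Proof. by apply/seteqP; split=> w /=; [exact: contrapT | move=> ? ?]. Qed.

Section flow_shift.
Variables (T : Type) (theta : int -> T -> T) (a : int -> T -> nat).
Hypothesis theta_morph : forall m n, theta (m + n) = theta m \o theta n.
Hypothesis a_compat : flow_compatible theta a.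

Lemma a_shift k n w : a n (theta k w) = a (n + k) w.
Proof. by rewrite a_compat [in RHS]a_compat theta_morph. Qed.

Lemma preimage_a k n (Q : nat -> Prop) :
  theta k @^-1` [set w | Q (a n w)] = [set w | Q (a (n + k) w)].
Proof. by apply/seteqP; split => w /=; rewrite a_shift. Qed.

Lemma iter_fmap_shift k w j x :
  iter j (Defs.fmap a (theta k w)) x = iter j (Defs.fmap a w) (x + k) - k.
Proof.
elim: j => [|j IH] /=; first lia.
by rewrite IH /Defs.fmap a_shift subrK; lia.
Qed.

Lemma descendants_shift k w y x :
  descendants a (theta k w) y x <-> descendants a w (y + k) (x + k).
Proof. by split=> -[j jx]; exists j; move: jx; rewrite iter_fmap_shift; lia. Qed.

Lemma preimage_ephemeral k y : theta k @^-1` ephemeral a y = ephemeral a (y + k).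
Proof.
apply/seteqP; split => w /= /ephemeralP [L DL]; apply/ephemeralP.
  exists (L + k) => x Dx.
  have /DL : descendants a (theta k w) y (x - k) by apply/descendants_shift; rewrite subrK.
  lia.
exists (L - k) => x /descendants_shift /DL; lia.
Qed.

Lemma preimage_successful k y :
  theta k @^-1` successful a y = successful a (y + k).
Proof.
change (theta k @^-1` (~` ephemeral a y) = ~` ephemeral a (y + k)).
by rewrite -preimage_setC preimage_ephemeral.
Qed.

End flow_shift.

Section past_measurability.
Context d (T : measurableType d) (a : int -> T -> nat).
Hypothesis a_gt0 : forall n w, (0 < a n w)%N.
Local Notation past z := (cylinders a [pred i | i < z]).

Lemma level_set_g_sigma (J : pred int) n v :
  J n -> <<s cylinders a J >> [set w | a n w = v].
Proof.
move=> Jn; apply: sub_sigma_algebra; right; exists [:: n], (fun _ => v).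
by rewrite cylinder1 /= Jn.
Qed.

Lemma lt_set_g_sigma (J : pred int) n v :
  J n -> <<s cylinders a J >> [set w | (v < a n w)%N].
Proof.
move=> Jn; pose GT := g_sigma_algebraType (cylinders a J).
rewrite (_ : [set _ | _] = \bigcup_(i : nat) [set w | a n w = (v + i).+1]).
  by apply: (@bigcupT_measurable _ GT) => i; exact: level_set_g_sigma.
apply/seteqP; split=> w /=; last by move=> [i _ ->]; lia.
by move=> vn; exists (a n w - v.+1)%N => //=; lia.
Qed.

Lemma iter_fmap_eq_g_sigma z j x y : y <= z ->
  <<s past z >> [set w | iter j (Defs.fmap a w) x = y].
Proof.
pose GT := g_sigma_algebraType (past z).
elim: j x => [|j IH] x yz /=.
  have [->|xy] := eqVneq x y.
    by rewrite (_ : [set _ | _] = setT); [exact: (@measurableT _ GT)|apply/seteqP].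
  rewrite (_ : [set _ | _] = set0); first exact: (@measurable0 _ GT).
  by apply/seteqP; split=> // w /= /eqP; rewrite (negbTE xy).
have [xy|yx] := ltP x y; last first.
  rewrite (_ : [set _ | _] = set0); first exact: (@measurable0 _ GT).
  apply/seteqP; split=> // w /=; rewrite -iterS iterSr => jy.
  have := iter_fmap_ge a w j (Defs.fmap a w x); have := fmap_gt (a_gt0^~ w) x; lia.
rewrite (_ : [set _ | _] = \bigcup_(k : nat)
    ([set w | a x w = k] `&` [set w | iter j (Defs.fmap a w) (x + k%:Z) = y])).
  apply: (@bigcupT_measurable _ GT) => k; apply: (@measurableI _ GT); last exact: IH.
  by apply: level_set_g_sigma; rewrite /= (lt_le_trans xy yz).
apply/seteqP; split=> w /=; rewrite -iterS iterSr; first by exists (a x w).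
by move=> [k _ [<-]].
Qed.

Lemma descendants_g_sigma z y x : y <= z ->
  <<s past z >> [set w | descendants a w y x].
Proof.
move=> yz; rewrite (_ : [set _ | _] = \bigcup_(j : nat) [set w | iter j (Defs.fmap a w) x = y]).
  apply: (@bigcupT_measurable _ (g_sigma_algebraType (past z))) => j.
  exact: iter_fmap_eq_g_sigma.
by apply/seteqP; split=> w /= [j]; exists j.
Qed.

Lemma successful_g_sigma z y : y <= z -> <<s past z >> (successful a y).
Proof.
move=> yz; pose GT := g_sigma_algebraType (past z).
rewrite -[successful a y]setCK setC_successful; apply: (@measurableC _ GT).
rewrite (_ : ephemeral a y = \bigcup_(N : nat) \bigcap_(k : nat)
    ~` [set w | descendants a w y (- N%:Z - k.+1%:Z)]).
  apply: (@bigcupT_measurable _ GT) => N; apply: (@bigcapT_measurable _ GT) => k.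
  by apply: (@measurableC _ GT); exact: descendants_g_sigma.
apply/seteqP; split=> w.
  by move=> /ephemeralP [L DL]; exists (absz L) => // k _ /= /DL; lia.
move=> [N _ noD]; apply/ephemeralP; exists (- N%:Z) => x Dx; apply: contrapT => xN.
have /= := noD (absz (- N%:Z - x - 1)%R) I; apply.
by have -> : - N%:Z - (absz (- N%:Z - x - 1)%R).+1%:Z = x by lia.
Qed.

End past_measurability.

Section successful_intensity.
Context d (T : measurableType d) (R : realType) (P : probability T R).
Variables (theta : int -> T -> T) (a : int -> T -> nat).
Hypothesis flow : measure_preserving_flow P theta.
Hypothesis compat : flow_compatible theta a.
Hypothesis iid : iid_nat P a.
Hypothesis a_gt0 : forall n w, (0 < a n w)%N.
Local Notation S := (successful a).
Local Open Scope ereal_scope.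

Let theta_morph m n : theta (m + n) = theta m \o theta n.
Proof. by case: flow. Qed.

Let P_theta k A : measurable A -> P (theta k @^-1` A) = P A.
Proof. by case: flow => _ _ _; apply. Qed.

Let a_meas n v : measurable [set w | a n w = v].
Proof. by case: iid. Qed.

Lemma successful_measurable y : measurable (S y).
Proof. by apply: (g_sigma_cylinders_measurable a_meas); exact: successful_g_sigma. Qed.
#[local] Hint Resolve successful_measurable : core.

Let a_lt_meas n v : measurable [set w | (v < a n w)%N].
Proof. by apply: (g_sigma_cylinders_measurable a_meas); exact: (lt_set_g_sigma (J := predT)). Qed.

Let child_meas y k : measurable (successful_child a y k).
Proof. exact: measurableI. Qed.

Let crossing_meas k : measurable (successful_crossing a k).
Proof. exact: measurableI. Qed.

Lemma measure_successful_child y k :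
  P (successful_child a y k) = P (S 0 `&` [set w | a 0 w = k]).
Proof.
rewrite -[RHS](P_theta (y - k%:Z)); last exact: measurableI.
by rewrite preimage_setI preimage_successful // (preimage_a theta_morph compat _ _ (eq^~ k)) add0r.
Qed.

Lemma series_successful_child0 : \sum_(k <oo) P (successful_child a 0 k) = P (S 0).
Proof.
under eq_eseriesr do rewrite measure_successful_child.
rewrite -measure_bigcup_null_overlaps => [|k|j k jk].
- congr (P _); apply/seteqP; split=> [w [k _ []] //|w S0w].
  by exists (a 0 w).
- exact: measurableI.
- apply/eqP; rewrite eq_le measure_ge0 andbT -(measure0 P) le_measure ?inE //.
    by apply: measurableI; exact: measurableI.
  by move=> w [[_ /= ->] [_ /=]] /eqP; rewrite gtn_eqF.
Qed.

Hypothesis a_integrable : \int[P]_w ((a 0 w)%:R : R)%:E < +oo.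

(* the jump from [-(m+1)] reaches [0]; by stationarity [P (long_jump m) = P (m < a_0)] *)
Let long_jump m := [set w | (m < a (- m.+1%:Z) w)%N].

Let lim_sup_long_jump_meas : measurable (lim_sup_set long_jump).
Proof. by apply: bigcapT_measurable => n; apply: bigcup_measurable => m _; exact: a_lt_meas. Qed.

Lemma long_jumps_finitely_often : P (lim_sup_set long_jump) = 0.
Proof.
have P_long_jump m : P (long_jump m) = P [set w | (m < a 0 w)%N].
  rewrite -[RHS](P_theta (- m.+1%:Z)) //.
  by rewrite (preimage_a theta_morph compat _ _ (leq m.+1)) add0r.
have : \sum_(m <oo) P (long_jump m) < +oo.
  by under eq_eseriesr do rewrite P_long_jump; rewrite -integral_nat_tail.
by move=> fin; exact: (lim_sup_set_cvg0 (fun m => a_lt_meas _ _) fin).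
Qed.

Lemma eventually_short_jumps_ae w :
  ~ lim_sup_set long_jump w -> eventually_short_jumps a w.
Proof.
move=> /(notin_lim_sup_set (F := long_jump)) [N short]; exists N.+1 => -[//|m] Nm.
by rewrite ltnNge; apply/negP => long; apply: (short m).
Qed.

Lemma successful0_sub :
  S 0 `<=` \bigcup_k successful_child a 0 k `|` lim_sup_set long_jump.
Proof.
move=> w S0w; have [|short] := pselect (lim_sup_set long_jump w); first by right.
have [k [akk Skw]] := exists_successful_child0 (a_gt0^~ w) (eventually_short_jumps_ae short) S0w.
by left; exists k => //; rewrite /successful_child sub0r.
Qed.

Lemma successful_children0_overlap j k : (j < k)%N ->
  P (successful_child a 0 k `&` successful_child a 0 j) = 0.
Proof.
apply: null_overlaps_of_series_le => //; rewrite series_successful_child0.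
apply: le_trans (le_measure _ _ _ successful0_sub) _; rewrite ?inE //.
  by apply: measurableU => //; exact: bigcupT_measurable.
apply: le_trans (measureU2 _ _ _) _ => //; first exact: bigcupT_measurable.
by rewrite [X in _ + X](_ : _ = 0) ?adde0 //; exact: long_jumps_finitely_often.
Qed.

Lemma successful_children_overlap y j k : (j < k)%N ->
  P (successful_child a y k `&` successful_child a y j) = 0.
Proof.
move=> jk; rewrite -(successful_children0_overlap jk) -[RHS](P_theta y); last exact: measurableI.
rewrite !preimage_setI !preimage_successful //.
by rewrite !(preimage_a theta_morph compat _ _ (eq^~ _)) !sub0r ![(- _ + y)%R]addrC.
Qed.

Hypothesis a_one : 0 < P [set w | a 0 w = 1%N].

Lemma successful_jump_over_successful b z v : (b < z < v)%R ->
  P (S b `&` S z `&` [set w | a b w = absz (v - b)%R]) = 0.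
Proof.
move=> bzv; have /andP[bz _] := bzv; set E := _ `&` _ `&` _.
set C := cylinder a [seq (z + i%:Z)%R | i <- iota 0 (absz (v - z)%R)] (fun=> 1%N).
have E_past : <<s cylinders a [pred i | (i < z)%R] >> E.
  pose GT := g_sigma_algebraType (cylinders a [pred i | (i < z)%R]).
  apply: (@measurableI _ GT); first apply: (@measurableI _ GT).
  - by apply: successful_g_sigma => //; exact: ltW.
  - exact: successful_g_sigma.
  - exact: level_set_g_sigma.
have C_future : <<s cylinders a [pred i | (z <= i)%R] >> C.
  apply: sub_sigma_algebra; right; eexists _, _; split; last reflexivity.
  by apply/allP => _ /mapP[i _ ->] /=; lia.
have [_ a_iid a_indep] := iid.
have C_gt0 : 0 < P C.
  rewrite (measure_cylinder a_indep); apply: (big_ind (fun x => 0 < x)) => //.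
    exact: mule_gt0.
  by move=> i _; rewrite a_iid.
(* on [E `&` C], both [b] and [v - 1] are successful children of [v] *)
have EC0 : P (E `&` C) = 0.
  have bv : (1 < absz (v - b)%R)%N by lia.
  apply/eqP; rewrite eq_le measure_ge0 andbT -(successful_children_overlap v bv).
  apply: le_measure; rewrite ?inE.
  - apply: measurableI; first exact: (g_sigma_cylinders_measurable a_meas E_past).
    exact: cylinder_measurable.
  - exact: measurableI.
  move=> w [[[Sb Sz] ab] Cw]; apply: successful_children_of_jump_over bzv Sb Sz ab _.
  by move=> i ilt; apply: Cw; apply/mapP; exists i; rewrite ?mem_iota.
have past_future i : [pred i | (i < z)%R] i -> [pred i | (z <= i)%R] i -> False.
  by rewrite /= => iz zi; lia.
have := g_sigma_cylinders_indep a_meas a_indep past_future E_past C_future.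
rewrite EC0 => /esym/eqP; rewrite mule_eq0 => /orP[/eqP //|/eqP C0].
by move: C_gt0; rewrite C0 ltxx.
Qed.

Lemma successful_crossings_overlap j k : (j < k)%N ->
  P (successful_crossing a k `&` successful_crossing a j) = 0.
Proof.
move=> jk; pose U i := S (- k%:Z) `&` S (- j%:Z) `&` [set w | a (- k%:Z) w = (i.+1 + k)%N].
have mU i : measurable (U i) by apply: measurableI => //; exact: measurableI.
have sub : successful_crossing a k `&` successful_crossing a j `<=` \bigcup_i U i.
  move=> w [[Sk /= ka] [Sj _]]; exists (a (- k%:Z) w - k.+1)%N => //.
  by split; [split|rewrite /=; lia].
apply/eqP; rewrite eq_le measure_ge0 andbT.
apply: le_trans (le_measure _ _ _ sub) _; rewrite ?inE; first exact: measurableI.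
  exact: bigcupT_measurable.
apply: le_trans (le_mu_bigcup _ _ _) _ => //; first exact: bigcupT_measurable.
rewrite eseries0 // => i _ _; rewrite /U.
have ->: (i.+1 + k)%N = absz (i.+1%:Z - - k%:Z)%R by lia.
by apply: successful_jump_over_successful; lia.
Qed.

Lemma successful_crossings_cover :
  ~` lim_sup_set long_jump `<=` \bigcup_k successful_crossing a k.
Proof.
move=> w /eventually_short_jumps_ae short.
have [n [n0 fn0 Sn]] := exists_successful_crossing0 (a_gt0^~ w) short.
have nE : (- (absz n)%:Z)%R = n by lia.
exists (absz n) => //; rewrite /successful_crossing nE; split=> //=.
by move: fn0; rewrite /Defs.fmap; lia.
Qed.

Lemma series_successful_crossing : \sum_(k <oo) P (successful_crossing a k) = 1.
Proof.
rewrite -measure_bigcup_null_overlaps //; last exact: successful_crossings_overlap.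
apply/eqP; rewrite eq_le probability_le1 /=; last exact: bigcupT_measurable.
apply: le_trans (le_measure _ _ _ successful_crossings_cover); rewrite ?inE.
- change (1 <= P (~` lim_sup_set long_jump)).
  by rewrite probability_setC // long_jumps_finitely_often sube0.
- exact: measurableC.
- exact: bigcupT_measurable.
Qed.

Lemma measure_successful_crossing k :
  P (successful_crossing a k) = P (S 0) * P [set w | (k < a 0 w)%N].
Proof.
have [_ _ a_indep] := iid.
have past_future (i : int) : [pred i : int | (i < 0)%R] i -> [pred i : int | (0 <= i)%R] i -> False.
  by rewrite /= => i0 i0'; lia.
have a0_future : <<s cylinders a [pred i : int | (0 <= i)%R] >> [set w | (k < a 0 w)%N].
  exact: lt_set_g_sigma.
rewrite -(g_sigma_cylinders_indep a_meas a_indep past_future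
  (successful_g_sigma a_gt0 (lexx 0%R)) a0_future).
rewrite -[RHS](P_theta (- k%:Z)); last exact: measurableI.
rewrite preimage_setI preimage_successful //.
by rewrite (preimage_a theta_morph compat _ _ (leq k.+1)) add0r.
Qed.

Lemma measure_successful0 :
  P (S 0) = ((fine (\int[P]_w ((a 0 w)%:R : R)%:E))^-1)%:E.
Proof.
have E_ge0 : 0 <= \int[P]_w ((a 0 w)%:R : R)%:E by apply: integral_ge0 => w _; rewrite lee_fin.
have E_fin : \int[P]_w ((a 0 w)%:R : R)%:E \is a fin_num by rewrite ge0_fin_numE.
have := series_successful_crossing.
under eq_eseriesr do rewrite measure_successful_crossing.
rewrite -(fineK (fin_num_measure P _ (successful_measurable 0))) nneseriesZl //.
rewrite -integral_nat_tail //.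
rewrite -(fineK E_fin) -EFinM => /(congr1 fine) /= SE1.
have E_neq0 : fine (\int[P]_w ((a 0 w)%:R : R)%:E) != 0%R.
  by apply: contra_eq_neq SE1 => ->; rewrite mulr0 eq_sym oner_neq0.
by congr (_%:E); rewrite -[LHS](mulfK E_neq0) SE1 mul1r.
Qed.

End successful_intensity.

Theorem mainTheorem8 (d : measure_display) (T : measurableType d)
  (R : realType) (P : probability T R)
  (theta : int -> T -> T) (a : int -> T -> nat) :
  measure_preserving_flow P theta ->
  flow_compatible theta a ->
  iid_nat P a ->
  (forall n w, (1 <= a n w)%N) ->
  (\int[P]_w ((a 0%R w)%:R : R)%:E < +oo)%E ->
  (0 < P [set w | a 0%R w = 1%N])%E ->
  P (successful a 0) = ((fine (\int[P]_w ((a 0%R w)%:R : R)%:E))^-1)%:E /\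
  P (ephemeral a 0) = (1 - (fine (\int[P]_w ((a 0%R w)%:R : R)%:E))^-1)%:E.
Proof.
move=> flow compat iid a_gt0 a_integrable a_one.
have S0 := measure_successful0 flow compat iid a_gt0 a_integrable a_one.
split=> //; rewrite -setC_successful probability_setC ?S0 ?EFinB //.
exact: successful_measurable iid a_gt0 0.
Qed.
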